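(* Let $X_1,X_2$ be independent real random variables with densities symmetric about their means $\mu_1,\mu_2$ and positive on all of $\mathbb{R}$. Suppose the platform uses a weighted-quadratic disclosure (WQD) policy $\gamma$ with weights $0<w_1<\cdots<w_n<1$, and the receiver estimates by $\eta^\star$, where $\eta^\star((1,x_1),m)=(x_1,\mu_2)$ and $\eta^\star((2,x_2),m)=(\mu_1,x_2)$. For $\theta\in[0,1]$ and $m\in[n]$ the receiver's expected loss from sending $m$ is then $J_R(m\mid\theta)=L(w_m\mid\theta)$, where for $w\in[0,1]$ $$L(w\mid\theta)=\theta\,\mathbf{E}\big[(X_1-\mu_1)^2\mathbf{1}\big((1-w)(X_2-\mu_2)^2\ge w(X_1-\mu_1)^2\big)\big]+(1-\theta)\,\mathbf{E}\big[(X_2-\mu_2)^2\mathbf{1}\big((1-w)(X_2-\mu_2)^2< w(X_1-\mu_1)^2\big)\big].$$ Then the receiver's best response (a policy $\psi:[0,1]\to[n]$ with $\psi(\theta)\in\arg\min_{m\in[n]}L(w_m\mid\theta)$ for every $\theta$) is a monotone partition preference disclosure (MPPD) policy, whose thresholds $\theta^\star_{m,m+1}$, $1\le m<n$, are the solutions of $$L(w_m\mid\theta^\star_{m,m+1})=L(w_{m+1}\mid\theta^\star_{m,m+1}),$$ with corners $\theta^\star_{0,1}=0$ and $\theta^\star_{n,n+1}=1$.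
   Context: $[n]=\{1,\dots,n\}$. The receiver, with private preference $\theta\in[0,1]$, sends a message $m\in[n]$; the platform, observing $(m,x_1,x_2)$, discloses $s=\gamma(m,x_1,x_2)\in\{1,2\}$, i.e. the receiver sees $y=(s,x_s)$, and the loss is $\theta(x_1-\hat x_1)^2+(1-\theta)(x_2-\hat x_2)^2$ where $(\hat x_1,\hat x_2)$ is the receiver's estimate. A WQD policy with weights $w_1,\dots,w_n$ sets $\gamma(m,x_1,x_2)=1$ if $w_m(x_1-\mu_1)^2>(1-w_m)(x_2-\mu_2)^2$ and $\gamma(m,x_1,x_2)=2$ otherwise. A policy $\psi:[0,1]\to[n]$ is an MPPD policy if there are thresholds $0=\theta^\star_{0,1}<\theta^\star_{1,2}<\cdots<\theta^\star_{n-1,n}<\theta^\star_{n,n+1}=1$ such that $\psi(\theta)=m$ for all $\theta\in(\theta^\star_{m-1,m},\theta^\star_{m,m+1})$, $m\in[n]$. *)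

From HB Require Import structures.
From mathcomp Require Import all_boot all_order all_algebra.
From mathcomp Require Import all_classical all_reals all_analysis.
Set Implicit Arguments. Unset Strict Implicit. Unset Printing Implicit Defensive.
Import Order.TTheory GRing.Theory Num.Theory.
Local Open Scope classical_set_scope.
Local Open Scope ring_scope.

Notation leb R := (@lebesgue_measure R).

Definition sym_pos_density (R : realType) (f : R -> R) (mu : R) : Prop :=
  [/\ measurable_fun [set: R] f,
      (forall x, 0 < f x),
      (\int[leb R]_x (f x)%:E = 1)%E,
      (forall x, f (mu + x) = f (mu - x)) &
      (\int[leb R]_x (((x - mu) ^+ 2) * f x)%:E < +oo)%E].

(* E[g(X1,X2)] for independent X1, X2 with densities f1, f2:
   integral of g against the product density on R x R. *)
Definition Exp2 (R : realType) (f1 f2 : R -> R) (g : R * R -> R) : R :=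
  Rintegral ((leb R) \x (leb R))%E [set: R * R]
    (fun z => g z * (f1 z.1 * f2 z.2)).

Definition Lloss (R : realType) (f1 f2 : R -> R) (mu1 mu2 w theta : R) : R :=
  theta * Exp2 f1 f2 (fun z =>
     (z.1 - mu1) ^+ 2 *
     (if w * (z.1 - mu1) ^+ 2 <= (1 - w) * (z.2 - mu2) ^+ 2 then 1 else 0))
  + (1 - theta) * Exp2 f1 f2 (fun z =>
     (z.2 - mu2) ^+ 2 *
     (if (1 - w) * (z.2 - mu2) ^+ 2 < w * (z.1 - mu1) ^+ 2 then 1 else 0)).

Definition best_response (R : realType) (n : nat) (L : R -> R -> R)
    (w : nat -> R) (psi : R -> nat) : Prop :=
  forall theta, 0 <= theta <= 1 ->
    ((1 <= psi theta <= n)%N /\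
     forall m, (1 <= m <= n)%N -> L (w (psi theta)) theta <= L (w m) theta).

(* MPPD policy with thresholds t 0 = 0 < t 1 < ... < t (n-1) < t n = 1,
   where t m stands for theta*_{m,m+1}. *)
Definition MPPD_with (R : realType) (n : nat) (psi : R -> nat) (t : nat -> R) : Prop :=
  [/\ t 0%N = 0, t n = 1,
      (forall m, (m < n)%N -> t m < t m.+1) &
      (forall m, (1 <= m <= n)%N ->
         forall theta, t m.-1 < theta < t m -> psi theta = m)].

(* With weight w = th the disclosure rule reveals the coordinate with the larger
   weighted error, so the pointwise loss is min (th (x1 - mu1)^2, (1 - th) (x2 - mu2)^2),
   while for any other weight it is one of these two terms. Hence L(th | th) <= L(w | th),
   and for 0 < a < b < 1 the inequalities L(a | a) < L(b | a) and L(b | b) < L(a | b)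
   are strict: the rules for a and b disagree on a rectangle, which has positive mass
   because the densities are positive. As L(w | th) is
   affine in th, L(w_(m+1) | th) - L(w_m | th) is then affine with negative slope and
   vanishes at a unique t_m in (w_m, w_(m+1)); so the t_m increase, and for th between
   t_(m-1) and t_m the losses L(w_j | th) strictly decrease in j up to m and strictly
   increase after it. *)

From HB Require Import structures.
From mathcomp Require Import all_boot all_order all_algebra.
From mathcomp Require Import all_classical all_reals all_analysis.
From mathcomp Require Import measurable_realfun.
From mathcomp Require Import ring lra zify.
Import Order.TTheory GRing.Theory Num.Theory.
Set Implicit Arguments. Unset Strict Implicit. Unset Printing Implicit Defensive.
Local Open Scope classical_set_scope.
Local Open Scope ring_scope.

Lemma homo_ltn_between (T : Type) (r : T -> T -> Prop) (f : nat -> T) (a b : nat) :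
  (forall y x z, r x y -> r y z -> r x z) ->
  (forall i, (a <= i < b)%N -> r (f i) (f i.+1)) ->
  forall i j, (a <= i)%N -> (i < j)%N -> (j <= b)%N -> r (f i) (f j).
Proof.
move=> r_trans r_step i j ai ij jb.
apply: (@homo_ltn_in T [pred k | a <= k <= b]%N f r r_trans); rewrite ?inE //; try lia.
- by move=> x y; rewrite !inE => ? ? k ?; rewrite inE; lia.
- by move=> k; rewrite !inE => ? ?; apply: r_step; lia.
Qed.

Section SingleCrossing.
Variables (R : realType) (A B : R -> R) (L : R -> R -> R).
Hypothesis L_affine : forall v th, L v th = th * A v + (1 - th) * B v.
Hypothesis L_self_pref : forall a b, 0 < a -> a < b -> b < 1 ->
  L a a < L b a /\ L b b < L a b.

Definition slope (a b : R) : R := A b - A a - (B b - B a).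
Definition crossing (a b : R) : R := (B a - B b) / slope a b.

Section Pair.
Variables a b : R.
Hypotheses (a_gt0 : 0 < a) (lt_ab : a < b) (b_lt1 : b < 1).

Lemma slope_lt0 : slope a b < 0.
Proof.
have [pref_a pref_b] := L_self_pref a_gt0 lt_ab b_lt1.
have L_subE th : L b th - L a th = (B b - B a) + th * slope a b.
  by rewrite !L_affine /slope; ring.
move: pref_a pref_b; rewrite -subr_gt0 -[_ < L a b]subr_lt0 !L_subE => h_a h_b.
have : (b - a) * slope a b < 0 by lra.
by rewrite pmulr_rlt0 // subr_gt0.
Qed.

Lemma L_sub_crossing th : L b th - L a th = slope a b * (th - crossing a b).
Proof.
have := ltr0_neq0 slope_lt0; rewrite /crossing /slope !L_affine => s_neq0.
by field.
Qed.

Lemma L_lt_crossing th : (L a th < L b th) = (th < crossing a b).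
Proof. by rewrite -subr_gt0 L_sub_crossing nmulr_rgt0 ?slope_lt0 // subr_lt0. Qed.

Lemma L_gt_crossing th : (L b th < L a th) = (crossing a b < th).
Proof. by rewrite -subr_lt0 L_sub_crossing nmulr_rlt0 ?slope_lt0 // subr_gt0. Qed.

Lemma L_eq_crossing th : (L a th == L b th) = (th == crossing a b).
Proof.
by rewrite eq_sym -subr_eq0 L_sub_crossing mulf_eq0 lt_eqF ?slope_lt0 // subr_eq0.
Qed.

Lemma crossing_between : a < crossing a b < b.
Proof.
have [pref_a pref_b] := L_self_pref a_gt0 lt_ab b_lt1.
by rewrite -L_lt_crossing -L_gt_crossing pref_a pref_b.
Qed.

End Pair.

Variables (n : nat) (w : nat -> R).
Hypotheses (n_gt0 : (0 < n)%N) (w1_gt0 : 0 < w 1%N)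
  (w_incr : forall m, (1 <= m < n)%N -> w m < w m.+1) (wn_lt1 : w n < 1).

Lemma w_le i j : (1 <= i)%N -> (i <= j)%N -> (j <= n)%N -> w i <= w j.
Proof.
move=> i_gt0; rewrite leq_eqVlt => /orP[/eqP-> //|ij jn].
by apply: (homo_ltn_between le_trans _ i_gt0 ij jn) => k kn; rewrite ltW ?w_incr.
Qed.

Lemma w_between m : (1 <= m < n)%N -> [/\ 0 < w m, w m < w m.+1 & w m.+1 < 1].
Proof.
move=> mn; split.
- by apply: lt_le_trans w1_gt0 (w_le _ _ _); lia.
- exact: w_incr.
- by apply: le_lt_trans wn_lt1; apply: w_le; lia.
Qed.

Definition threshold (m : nat) : R :=
  if m == 0%N then 0 else if (m < n)%N then crossing (w m) (w m.+1) else 1.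

Lemma threshold_crossing m : (1 <= m < n)%N -> threshold m = crossing (w m) (w m.+1).
Proof. by case: m => // m /andP[_ mn]; rewrite /threshold mn. Qed.

Lemma threshold_n : threshold n = 1.
Proof. by rewrite /threshold ltnn; case: n n_gt0. Qed.

Lemma threshold_inner m : (1 <= m < n)%N -> w m < threshold m < w m.+1.
Proof.
move=> mn; have [w_gt0 lt_w w_lt1] := w_between mn.
by rewrite threshold_crossing // crossing_between.
Qed.

Lemma threshold_lt_w m : (m < n)%N -> threshold m < w m.+1.
Proof.
case: m => [_|m mn]; first exact: w1_gt0.
by case/andP: (threshold_inner (m := m.+1) ltac:(lia)).
Qed.

Lemma w_lt_threshold m : (1 <= m <= n)%N -> w m < threshold m.
Proof.
move=> /andP[m_gt0]; rewrite leq_eqVlt => /orP[/eqP->|lt_mn].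
  by rewrite threshold_n.
by case/andP: (threshold_inner (m := m) ltac:(lia)).
Qed.

Lemma threshold_incr m : (m < n)%N -> threshold m < threshold m.+1.
Proof. by move=> mn; rewrite (lt_trans (threshold_lt_w mn)) ?w_lt_threshold. Qed.

Lemma threshold_le i j : (i <= j)%N -> (j <= n)%N -> threshold i <= threshold j.
Proof.
rewrite leq_eqVlt => /orP[/eqP-> //|ij jn].
by apply: (homo_ltn_between le_trans _ (leq0n i) ij jn) => k kn; rewrite ltW ?threshold_incr.
Qed.

Lemma L_step_lt k th : (1 <= k < n)%N -> th < threshold k ->
  L (w k) th < L (w k.+1) th.
Proof.
by move=> kn; have [? ? ?] := w_between kn; rewrite L_lt_crossing -?threshold_crossing.
Qed.

Lemma L_step_gt k th : (1 <= k < n)%N -> threshold k < th ->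
  L (w k.+1) th < L (w k) th.
Proof.
by move=> kn; have [? ? ?] := w_between kn; rewrite L_gt_crossing -?threshold_crossing.
Qed.

Lemma L_argmin_unique m j th : (1 <= m <= n)%N -> (1 <= j <= n)%N -> j != m ->
  threshold m.-1 < th < threshold m -> L (w m) th < L (w j) th.
Proof.
move=> mn jn jm /andP[th_gt th_lt]; case: (ltngtP j m) jm => // [jm|mj] _.
- have gt_trans (y x z : R) : y < x -> z < y -> z < x by move=> xy /lt_trans; apply.
  apply: (homo_ltn_between (f := fun k => L (w k) th) (b := m) gt_trans _ (leqnn j) jm) => //.
  move=> k km; apply: L_step_gt; first lia.
  by apply: le_lt_trans th_gt; apply: threshold_le; lia.
- apply: (homo_ltn_between (f := fun k => L (w k) th) (b := j) lt_trans _ (leqnn m) mj) => //.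
  move=> k km; apply: L_step_lt; first lia.
  by apply: lt_le_trans th_lt _; apply: threshold_le; lia.
Qed.

Theorem best_response_MPPD psi : best_response n L w psi ->
  exists t : nat -> R,
    MPPD_with n psi t /\
    (forall m, (1 <= m < n)%N ->
       L (w m) (t m) = L (w m.+1) (t m) /\
       (forall th, 0 <= th <= 1 -> L (w m) th = L (w m.+1) th -> th = t m)).
Proof.
move=> br; exists threshold; split.
  split; [by [] | exact: threshold_n | exact: threshold_incr |].
  move=> m mn th th_in.
  have th01 : 0 <= th <= 1.
    case/andP: th_in => /ltW th_gt /ltW th_lt; apply/andP; split.
    - by apply: le_trans th_gt; apply: (threshold_le (i := 0)); lia.
    - by apply: le_trans th_lt _; rewrite -threshold_n threshold_le //; case/andP: mn.
  have [psi_n psi_min] := br th th01.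
  apply/eqP; apply: contraT => psi_m.
  by have := L_argmin_unique mn psi_n psi_m th_in; rewrite ltNge psi_min.
move=> m mn; have [? ? ?] := w_between mn.
split; first by apply/eqP; rewrite L_eq_crossing // threshold_crossing.
by move=> th _ /eqP; rewrite L_eq_crossing // -threshold_crossing // => /eqP.
Qed.

End SingleCrossing.

Lemma ratio_box (R : realFieldType) (p q : R) : 0 <= p -> p < q ->
  exists x1 x2 y1 y2 : R, [/\ x1 < x2, y1 < y2 &
    forall x y, x1 <= x <= x2 -> y1 <= y <= y2 -> (p * x) ^+ 2 < y ^+ 2 < (q * x) ^+ 2].
Proof.
move=> p_ge0 pq; have q_gt0 : 0 < q by exact: le_lt_trans pq.
have gap_gt0 : 0 < (q - p) ^+ 2 by rewrite exprn_gt0 // subr_gt0.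
(* [p * x <= p * (2q - p) < q * q <= q * x] leaves room for [y] *)
exists q, (2 * q - p), (p * (2 * q - p) + (q - p) ^+ 2 / 3),
  (p * (2 * q - p) + 2 * (q - p) ^+ 2 / 3); split; try lra.
move=> x y /andP[x_ge x_le] /andP[y_ge y_le].
have px_ge0 : 0 <= p * x by rewrite mulr_ge0 // (le_trans (ltW q_gt0)).
have px_lt : p * x < y.
  apply: le_lt_trans (ler_wpM2l p_ge0 x_le) _; apply: lt_le_trans y_ge; lra.
have y_lt : y < q * x.
  apply: le_lt_trans y_le (lt_le_trans _ (ler_wpM2l (ltW q_gt0) x_ge)).
  have -> : q * q = p * (2 * q - p) + (q - p) ^+ 2 by ring.
  lra.
by rewrite !expr2 !ltr_pM // (le_trans px_ge0) ?ltW.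
Qed.

Lemma disagreement_rectangle (R : realType) (mu1 mu2 a b : R) :
  0 < a -> a < b -> b < 1 ->
  exists u1 u2 v1 v2 : R, [/\ u1 < u2, v1 < v2 &
    forall z : R * R, (`[u1, u2] `*` `[v1, v2]) z ->
      a * (z.1 - mu1) ^+ 2 < (1 - a) * (z.2 - mu2) ^+ 2 /\
      (1 - b) * (z.2 - mu2) ^+ 2 < b * (z.1 - mu1) ^+ 2].
Proof.
move=> a_gt0 ab b_lt1; have b_gt0 : 0 < b by lra.
have oma_gt0 : 0 < 1 - a by lra.
have omb_gt0 : 0 < 1 - b by lra.
pose p := Num.sqrt (a / (1 - a)); pose q := Num.sqrt (b / (1 - b)).
have pE : a = (1 - a) * p ^+ 2.
  by rewrite sqr_sqrtr ?divr_ge0 ?ltW // mulrC divfK // gt_eqF.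
have qE : b = (1 - b) * q ^+ 2.
  by rewrite sqr_sqrtr ?divr_ge0 ?ltW // mulrC divfK // gt_eqF.
have pq : p < q.
  rewrite ltr_sqrt ?divr_gt0 //.
  by rewrite ltr_pdivrMr // mulrAC ltr_pdivlMr //; nra.
have [x1 [x2 [y1 [y2 [x12 y12 box]]]]] := ratio_box (sqrtr_ge0 _) pq.
exists (mu1 + x1), (mu1 + x2), (mu2 + y1), (mu2 + y2); split; try lra.
move=> z [/=]; rewrite !in_itv /= => /andP[x_ge x_le] /andP[y_ge y_le].
have /andP[lt_p lt_q] := box (z.1 - mu1) (z.2 - mu2)
  ltac:(apply/andP; lra) ltac:(apply/andP; lra).
have aE : a * (z.1 - mu1) ^+ 2 = (1 - a) * (p * (z.1 - mu1)) ^+ 2.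
  by rewrite exprMn [RHS]mulrA -pE.
have bE : b * (z.1 - mu1) ^+ 2 = (1 - b) * (q * (z.1 - mu1)) ^+ 2.
  by rewrite exprMn [RHS]mulrA -qE.
by rewrite aE bE !ltr_pM2l.
Qed.

Definition loss1 (R : realType) (mu1 mu2 w : R) (z : R * R) : R :=
  (z.1 - mu1) ^+ 2 *
     (if w * (z.1 - mu1) ^+ 2 <= (1 - w) * (z.2 - mu2) ^+ 2 then 1 else 0).

Definition loss2 (R : realType) (mu1 mu2 w : R) (z : R * R) : R :=
  (z.2 - mu2) ^+ 2 *
     (if (1 - w) * (z.2 - mu2) ^+ 2 < w * (z.1 - mu1) ^+ 2 then 1 else 0).

Definition mixed_loss (R : realType) (mu1 mu2 w th : R) (z : R * R) : R :=
  th * loss1 mu1 mu2 w z + (1 - th) * loss2 mu1 mu2 w z.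

Section PointwiseLoss.
Variables (R : realType) (mu1 mu2 : R).
Implicit Types (w th : R) (z : R * R).

Local Ltac measurable_arith := repeat first
  [ exact: measurable_cst | exact: measurable_fst | exact: measurable_snd
  | apply: measurable_funM | apply: measurable_funD | apply: measurable_funB
  | apply: measurable_funX | apply: measurable_fun_ifT
  | apply: measurable_fun_ler | apply: measurable_fun_ltr ].

Lemma measurable_loss1 w : measurable_fun [set: R * R] (loss1 mu1 mu2 w).
Proof. rewrite /loss1; measurable_arith. Qed.

Lemma measurable_loss2 w : measurable_fun [set: R * R] (loss2 mu1 mu2 w).
Proof. rewrite /loss2; measurable_arith. Qed.

Lemma measurable_mixed_loss w th : measurable_fun [set: R * R] (mixed_loss mu1 mu2 w th).
Proof. rewrite /mixed_loss /loss1 /loss2; measurable_arith. Qed.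

Lemma loss1_bound w z : 0 <= loss1 mu1 mu2 w z <= (z.1 - mu1) ^+ 2 + (z.2 - mu2) ^+ 2.
Proof.
rewrite /loss1; case: ifP => _; rewrite ?mulr1 ?mulr0 ?lexx ?addr_ge0 ?sqr_ge0 //.
by rewrite lerDl sqr_ge0.
Qed.

Lemma loss2_bound w z : 0 <= loss2 mu1 mu2 w z <= (z.1 - mu1) ^+ 2 + (z.2 - mu2) ^+ 2.
Proof.
rewrite /loss2; case: ifP => _; rewrite ?mulr1 ?mulr0 ?lexx ?addr_ge0 ?sqr_ge0 //.
by rewrite lerDr sqr_ge0.
Qed.

Lemma mixed_lossE w th z : mixed_loss mu1 mu2 w th z =
  if w * (z.1 - mu1) ^+ 2 <= (1 - w) * (z.2 - mu2) ^+ 2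
  then th * (z.1 - mu1) ^+ 2 else (1 - th) * (z.2 - mu2) ^+ 2.
Proof.
rewrite /mixed_loss /loss1 /loss2 ltNge.
by case: ifP; rewrite /= !(mulr1, mulr0, addr0, add0r).
Qed.

Lemma mixed_loss_self th z : mixed_loss mu1 mu2 th th z =
  Num.min (th * (z.1 - mu1) ^+ 2) ((1 - th) * (z.2 - mu2) ^+ 2).
Proof. by rewrite mixed_lossE minEle. Qed.

Lemma mixed_loss_self_le w th z : mixed_loss mu1 mu2 th th z <= mixed_loss mu1 mu2 w th z.
Proof. by rewrite mixed_loss_self mixed_lossE; case: ifP; rewrite ge_min lexx ?orbT. Qed.

Lemma mixed_loss_self_lt a b z :
  a * (z.1 - mu1) ^+ 2 < (1 - a) * (z.2 - mu2) ^+ 2 ->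
  (1 - b) * (z.2 - mu2) ^+ 2 < b * (z.1 - mu1) ^+ 2 ->
  mixed_loss mu1 mu2 a a z < mixed_loss mu1 mu2 b a z /\
  mixed_loss mu1 mu2 b b z < mixed_loss mu1 mu2 a b z.
Proof.
move=> a_disc b_disc; rewrite !mixed_lossE (ltW a_disc) leNgt b_disc /=.
split; lra.
Qed.

End PointwiseLoss.

Lemma Rintegral_gt0 d (T : measurableType d) (R : realType)
    (mu : {measure set T -> \bar R}) (h : T -> R) (S : set T) :
  measurable S -> (0 < mu S)%E ->
  measurable_fun [set: T] h -> (forall x, 0 <= h x) ->
  mu.-integrable [set: T] (EFin \o h) -> (forall x, S x -> 0 < h x) ->
  0 < Rintegral mu [set: T] h.
Proof.
move=> mS muS_gt0 mh h_ge0 ih h_gt0.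
have absE : (\int[mu]_(x in [set: T]) `|(EFin \o h) x| = \int[mu]_(x in [set: T]) (h x)%:E)%E.
  by apply: eq_integral => x _; rewrite /= ger0_norm.
apply: fine_gt0; apply/andP; split; last by case/integrableP: ih => _; rewrite absE.
rewrite lt0e integral_ge0 ?andbT; last by move=> x _; rewrite lee_fin.
apply/negP => /eqP int_h0.
have mhE : measurable_fun [set: T] (EFin \o h) by exact/measurable_EFinP.
have [N [mN muN0 hN]] := (ae_eq_integral_abs mu measurableT mhE).1 (etrans absE int_h0).
suff : (mu S <= 0)%E by rewrite leNgt muS_gt0.
rewrite -muN0; apply: le_measure; rewrite ?inE //.
move=> x Sx; apply: hN => /(_ I) /= /eqP; rewrite eqe gt_eqF //; exact: h_gt0.
Qed.

Notation leb2 R := ((leb R) \x (leb R))%E.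

Lemma rectangle_measure_gt0 (R : realType) (u1 u2 v1 v2 : R) : u1 < u2 -> v1 < v2 ->
  (0 < (leb2 R) (`[u1, u2] `*` `[v1, v2]))%E.
Proof.
move=> u12 v12; rewrite product_measure1E; try exact: measurable_itv.
change (0 < leb R `[u1, u2]%classic * leb R `[v1, v2]%classic)%E.
by rewrite !lebesgue_measure_itv /= !lte_fin u12 v12 -!EFinD -EFinM lte_fin mulr_gt0 ?subr_gt0.
Qed.

Lemma integrable_mul_fst_snd (R : realType) (p q : R -> R) :
  measurable_fun [set: R] p -> measurable_fun [set: R] q ->
  (forall x, 0 <= p x) -> (forall x, 0 <= q x) ->
  (\int[leb R]_x (p x)%:E < +oo)%E -> (\int[leb R]_x (q x)%:E < +oo)%E ->
  (leb2 R).-integrable [set: R * R] (fun z => (p z.1 * q z.2)%:E).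
Proof.
move=> mp mq p_ge0 q_ge0 ip iq.
have mpq : measurable_fun [set: R * R] (fun z : R * R => p z.1 * q z.2).
  by apply: measurable_funM; [exact: measurableT_comp mp measurable_fst
                              | exact: measurableT_comp mq measurable_snd].
have mpE : measurable_fun [set: R] (EFin \o p) by exact/measurable_EFinP.
have mqE : measurable_fun [set: R] (EFin \o q) by exact/measurable_EFinP.
have int_q_ge0 : (0 <= \int[leb R]_x (q x)%:E)%E.
  by apply: integral_ge0 => y _; rewrite lee_fin.
apply/integrable12ltyP; first exact/measurable_EFinP.
under eq_integral => x _.
  under eq_integral => y _ do rewrite /= ger0_norm ?mulr_ge0 // EFinM.
  rewrite ge0_integralZl ?lee_fin //; first over.
  by move=> y _; rewrite lee_fin.
have int_p_ge0 : (0 <= \int[leb R]_x (p x)%:E)%E.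
  by apply: integral_ge0 => y _; rewrite lee_fin.
rewrite /= ge0_integralZr // ?lte_mul_pinfty ?ge0_fin_numE //.
by move=> x _; rewrite lee_fin.
Qed.

Definition prod_dens (R : realType) (f1 f2 : R -> R) (z : R * R) : R := f1 z.1 * f2 z.2.

Section Densities.
Variables (R : realType) (f1 f2 : R -> R) (mu1 mu2 : R).
Hypotheses (f1_dens : sym_pos_density f1 mu1) (f2_dens : sym_pos_density f2 mu2).

Lemma prod_dens_gt0 z : 0 < prod_dens f1 f2 z.
Proof.
by case: f1_dens => _ f1_gt0 _ _ _; case: f2_dens => _ f2_gt0 _ _ _; rewrite mulr_gt0.
Qed.

Lemma measurable_prod_dens : measurable_fun [set: R * R] (prod_dens f1 f2).
Proof.
case: f1_dens => mf1 _ _ _ _; case: f2_dens => mf2 _ _ _ _.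
by apply: measurable_funM; [exact: measurableT_comp mf1 measurable_fst
                            | exact: measurableT_comp mf2 measurable_snd].
Qed.

Lemma integrable_sqdev_density (f : R -> R) (mu : R) : sym_pos_density f mu ->
  [/\ measurable_fun [set: R] (fun x => ((x - mu) ^+ 2 + 1) * f x),
      (forall x, 0 <= ((x - mu) ^+ 2 + 1) * f x) &
      (\int[leb R]_x (((x - mu) ^+ 2 + 1) * f x)%:E < +oo)%E].
Proof.
case=> mf f_gt0 int1 _ mom.
have msq : measurable_fun [set: R] (fun x : R => (x - mu) ^+ 2).
  by apply: measurable_funX; apply: measurable_funB => //; exact: measurable_cst.
have f_ge0 x : 0 <= f x by exact/ltW.
split.
- by apply: measurable_funM => //; apply: measurable_funD => //; exact: measurable_cst.
- by move=> x; rewrite mulr_ge0 ?addr_ge0 ?sqr_ge0.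
under eq_integral => x _ do rewrite mulrDl mul1r EFinD.
rewrite ge0_integralD //.
- by rewrite int1 lte_add_pinfty // ltry.
- by move=> x _; rewrite lee_fin mulr_ge0 ?sqr_ge0.
- by apply/measurable_EFinP; exact: measurable_funM.
- by move=> x _; rewrite lee_fin.
- exact/measurable_EFinP.
Qed.

Lemma integrable_sqdev_dominated (g : R * R -> R) :
  measurable_fun [set: R * R] g ->
  (forall z, 0 <= g z <= (z.1 - mu1) ^+ 2 + (z.2 - mu2) ^+ 2) ->
  (leb2 R).-integrable [set: R * R] (EFin \o (fun z => g z * prod_dens f1 f2 z)).
Proof.
move=> mg g_bound.
have [mp p_ge0 ip] := integrable_sqdev_density f1_dens.
have [mq q_ge0 iq] := integrable_sqdev_density f2_dens.
apply: le_integrable (integrable_mul_fst_snd mp mq p_ge0 q_ge0 ip iq) => //.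
  by apply/measurable_EFinP; apply: measurable_funM => //; exact: measurable_prod_dens.
move=> z _; rewrite /= lee_fin.
have d_gt0 := prod_dens_gt0 z; have /andP[g_ge0 g_le] := g_bound z.
rewrite (ger0_norm (mulr_ge0 (p_ge0 _) (q_ge0 _))) (ger0_norm (mulr_ge0 g_ge0 (ltW d_gt0))).
move: g_le; set Y1 := (z.1 - mu1) ^+ 2; set Y2 := (z.2 - mu2) ^+ 2 => g_le.
rewrite [X in _ <= X](_ : _ = (Y1 + 1) * (Y2 + 1) * prod_dens f1 f2 z); last first.
  by rewrite /prod_dens; ring.
rewrite ler_wpM2r ?(ltW d_gt0) //.
by have := sqr_ge0 (z.1 - mu1); have := sqr_ge0 (z.2 - mu2); rewrite -/Y1 -/Y2; nra.
Qed.
End Densities.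

Section LossIntegrals.
Variables (R : realType) (f1 f2 : R -> R) (mu1 mu2 : R).
Hypotheses (f1_dens : sym_pos_density f1 mu1) (f2_dens : sym_pos_density f2 mu2).

Local Notation weighted g := (EFin \o (fun z => g z * prod_dens f1 f2 z)).

Lemma integrable_loss1 w : (leb2 R).-integrable [set: R * R] (weighted (loss1 mu1 mu2 w)).
Proof.
have := integrable_sqdev_dominated f1_dens f2_dens (measurable_loss1 mu1 mu2 w).
by apply; exact: loss1_bound.
Qed.

Lemma integrable_loss2 w : (leb2 R).-integrable [set: R * R] (weighted (loss2 mu1 mu2 w)).
Proof.
have := integrable_sqdev_dominated f1_dens f2_dens (measurable_loss2 mu1 mu2 w).
by apply; exact: loss2_bound.
Qed.

Lemma integrable_mixed_loss w th :
  (leb2 R).-integrable [set: R * R] (weighted (mixed_loss mu1 mu2 w th)).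
Proof.
have := integrableD measurableT (integrableZl measurableT th (integrable_loss1 w))
  (integrableZl measurableT (1 - th) (integrable_loss2 w)).
apply: eq_integrable => // z _ /=.
by rewrite -!EFinM -EFinD /mixed_loss; congr EFin; ring.
Qed.

Lemma Lloss_integral w th : Lloss f1 f2 mu1 mu2 w th =
  \int[leb2 R]_(z in [set: R * R]) (mixed_loss mu1 mu2 w th z * prod_dens f1 f2 z).
Proof.
rewrite /Lloss /Exp2 -(RintegralZl _ measurableT (integrable_loss1 w)).
rewrite -(RintegralZl _ measurableT (integrable_loss2 w)) -RintegralD //.
- by apply: eq_Rintegral => z _; rewrite /mixed_loss /prod_dens; ring.
- exact: integrableZl (integrable_loss1 w).
- exact: integrableZl (integrable_loss2 w).
Qed.

Lemma Lloss_lt_self w th (S : set (R * R)) :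
  measurable S -> (0 < leb2 R S)%E ->
  (forall z, S z -> mixed_loss mu1 mu2 th th z < mixed_loss mu1 mu2 w th z) ->
  Lloss f1 f2 mu1 mu2 th th < Lloss f1 f2 mu1 mu2 w th.
Proof.
move=> mS S_gt0 lt_S; rewrite !Lloss_integral -subr_gt0 -RintegralB //.
apply: (Rintegral_gt0 (mu := leb2 R) mS S_gt0).
- by apply: measurable_funB; apply: measurable_funM;
    first [exact: measurable_mixed_loss | exact: measurable_prod_dens f1_dens f2_dens].
- move=> z; rewrite -mulrBl; apply: mulr_ge0; last exact/ltW/(prod_dens_gt0 f1_dens f2_dens).
  by rewrite subr_ge0 mixed_loss_self_le.
- exact: integrableB (integrable_mixed_loss w th) (integrable_mixed_loss th th).
- by move=> z Sz; rewrite -mulrBl mulr_gt0 ?subr_gt0 ?lt_S ?(prod_dens_gt0 f1_dens f2_dens).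
- exact: integrable_mixed_loss.
- exact: integrable_mixed_loss.
Qed.

Lemma Lloss_self_pref a b : 0 < a -> a < b -> b < 1 ->
  Lloss f1 f2 mu1 mu2 a a < Lloss f1 f2 mu1 mu2 b a /\
  Lloss f1 f2 mu1 mu2 b b < Lloss f1 f2 mu1 mu2 a b.
Proof.
move=> a_gt0 ab b_lt1.
have [u1 [u2 [v1 [v2 [u12 v12 disagree]]]]] := disagreement_rectangle mu1 mu2 a_gt0 ab b_lt1.
have mS : measurable (`[u1, u2] `*` `[v1, v2] : set (R * R)).
  by apply: measurableX; exact: measurable_itv.
have S_gt0 := rectangle_measure_gt0 u12 v12.
by split; apply: (Lloss_lt_self mS S_gt0) => z /disagree[a_disc b_disc];
  have [] := mixed_loss_self_lt a_disc b_disc.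
Qed.

End LossIntegrals.

Unset Implicit Arguments.
Local Close Scope classical_set_scope.

Theorem lemma3 (R : realType) (f1 f2 : R -> R) (mu1 mu2 : R)
    (n : nat) (w : nat -> R) (psi : R -> nat) :
  sym_pos_density f1 mu1 ->
  sym_pos_density f2 mu2 ->
  (0 < n)%N ->
  0 < w 1%N ->
  (forall m, (1 <= m < n)%N -> w m < w m.+1) ->
  w n < 1 ->
  best_response n (Lloss f1 f2 mu1 mu2) w psi ->
  exists t : nat -> R,
    MPPD_with n psi t /\
    (forall m, (1 <= m < n)%N ->
       Lloss f1 f2 mu1 mu2 (w m) (t m) = Lloss f1 f2 mu1 mu2 (w m.+1) (t m) /\
       (forall theta, 0 <= theta <= 1 ->
          Lloss f1 f2 mu1 mu2 (w m) theta = Lloss f1 f2 mu1 mu2 (w m.+1) theta ->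
          theta = t m)).
Proof.
move=> f1_dens f2_dens n_gt0 w1_gt0 w_incr wn_lt1.
have Lloss_affine v th : Lloss f1 f2 mu1 mu2 v th =
    th * Exp2 f1 f2 (loss1 mu1 mu2 v) + (1 - th) * Exp2 f1 f2 (loss2 mu1 mu2 v).
  by [].
exact: (best_response_MPPD Lloss_affine (Lloss_self_pref f1_dens f2_dens)
  n_gt0 w1_gt0 w_incr wn_lt1).
Qed.
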